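(* Let $f,\hat f:M^2\to\mathbb{R}^3=\operatorname{Im}\mathbb{H}$ be non-flat conformal minimal immersions forming a Darboux pair, with $\hat f$ a Darboux transform of $f$ with parameter $t\in\mathbb{R}\setminus\{0\}$ with respect to the Christoffel dual $f^*=n$, where $n$ is the Gauss map of $f$, and let $\hat n=-(\hat f-f)^{-1}n(\hat f-f)$ be the Gauss map of $\hat f$. Then, up to translation, $$\hat f=f+\tfrac1t(\hat n-n)^{-1}.$$
   Context: $\mathbb{R}^3$ is identified with $\operatorname{Im}\mathbb{H}$ with product $xy=-\langle x,y\rangle+x\times y$ and $x^{-1}=-x/|x|^2$. The Gauss map $n$ of a minimal surface is a Christoffel dual of $f$ (Christoffel dual: locally, up to homothety and translation, a solution of $df^*=-\frac1E(f_udu-f_vdv)$ in conformal curvature line coordinates with metric $E(du^2+dv^2)$). A Darboux transform with parameter $t$ with respect to $f^*$ is a solution $\hat f$ of $d\hat f=t(\hat f-f)\,df^*(\hat f-f)$. A Darboux pair is a pair of surfaces enveloping a common 2-sphere congruence (first order contact at corresponding points), with commuting shape operators and conformally equivalent induced metrics. *)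

From Stdlib Require Import Reals.
Open Scope R_scope.

Record V3 := mkV3 { v1 : R; v2 : R; v3 : R }.
Definition vadd (a b : V3) : V3 := mkV3 (v1 a + v1 b) (v2 a + v2 b) (v3 a + v3 b).
Definition vsub (a b : V3) : V3 := mkV3 (v1 a - v1 b) (v2 a - v2 b) (v3 a - v3 b).
Definition dot (a b : V3) : R := v1 a * v1 b + v2 a * v2 b + v3 a * v3 b.
Definition cross (a b : V3) : V3 :=
  mkV3 (v2 a * v3 b - v3 a * v2 b) (v3 a * v1 b - v1 a * v3 b) (v1 a * v2 b - v2 a * v1 b).
Definition zero3 : V3 := mkV3 0 0 0.

Record H := mkH { hr : R; hi : R; hj : R; hk : R }.
Definition qadd (p q : H) : H := mkH (hr p + hr q) (hi p + hi q) (hj p + hj q) (hk p + hk q).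
Definition qopp (p : H) : H := mkH (- hr p) (- hi p) (- hj p) (- hk p).
Definition qsub (p q : H) : H := qadd p (qopp q).
Definition qscale (s : R) (p : H) : H := mkH (s * hr p) (s * hi p) (s * hj p) (s * hk p).
Definition qmul (p q : H) : H :=
  mkH (hr p * hr q - hi p * hi q - hj p * hj q - hk p * hk q)
      (hr p * hi q + hi p * hr q + hj p * hk q - hk p * hj q)
      (hr p * hj q - hi p * hk q + hj p * hr q + hk p * hi q)
      (hr p * hk q + hi p * hj q - hj p * hi q + hk p * hr q).
Definition qconj (p : H) : H := mkH (hr p) (- hi p) (- hj p) (- hk p).
Definition qnorm2 (p : H) : R := hr p * hr p + hi p * hi p + hj p * hj p + hk p * hk p.
Definition qinv (p : H) : H := qscale (/ qnorm2 p) (qconj p).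
Definition im (v : V3) : H := mkH 0 (v1 v) (v2 v) (v3 v).

Definition dom := R -> R -> Prop.

Definition open_dom (U : dom) : Prop :=
  forall u v, U u v -> exists e, 0 < e /\
    forall u' v', (u' - u) ^ 2 + (v' - v) ^ 2 < e ^ 2 -> U u' v'.

Definition connected_dom (U : dom) : Prop :=
  forall A B : dom, open_dom A -> open_dom B ->
    (forall u v, U u v -> A u v \/ B u v) ->
    (forall u v, U u v -> ~ (A u v /\ B u v)) ->
    (exists u v, U u v /\ A u v) -> (exists u v, U u v /\ B u v) -> False.

Definition continuous_on (U : dom) (F : R -> R -> R) : Prop :=
  forall u v, U u v -> forall eps, 0 < eps -> exists d, 0 < d /\
    forall u' v', U u' v' -> (u' - u) ^ 2 + (v' - v) ^ 2 < d ^ 2 ->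
      Rabs (F u' v' - F u v) < eps.

Definition is_dpartials (U : dom) (F Fu Fv : R -> R -> R) : Prop :=
  forall u v, U u v ->
    derivable_pt_lim (fun s => F s v) u (Fu u v) /\
    derivable_pt_lim (fun s => F u s) v (Fv u v).

Fixpoint Ck (U : dom) (k : nat) (F : R -> R -> R) : Prop :=
  match k with
  | O => continuous_on U F
  | S k' => exists Fu Fv, is_dpartials U F Fu Fv /\ Ck U k' Fu /\ Ck U k' Fv
  end.

Definition smooth (U : dom) (F : R -> R -> R) : Prop := forall k, Ck U k F.

Definition smooth3 (U : dom) (F : R -> R -> V3) : Prop :=
  smooth U (fun u v => v1 (F u v)) /\ smooth U (fun u v => v2 (F u v)) /\
  smooth U (fun u v => v3 (F u v)).

Definition is_partials3 (U : dom) (F Fu Fv : R -> R -> V3) : Prop :=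
  is_dpartials U (fun u v => v1 (F u v)) (fun u v => v1 (Fu u v)) (fun u v => v1 (Fv u v)) /\
  is_dpartials U (fun u v => v2 (F u v)) (fun u v => v2 (Fu u v)) (fun u v => v2 (Fv u v)) /\
  is_dpartials U (fun u v => v3 (F u v)) (fun u v => v3 (Fu u v)) (fun u v => v3 (Fv u v)).

Definition immersion (U : dom) (F : R -> R -> V3) : Prop :=
  smooth3 U F /\ exists Fu Fv, is_partials3 U F Fu Fv /\
    forall u v, U u v -> cross (Fu u v) (Fv u v) <> zero3.

Definition conformal (U : dom) (F : R -> R -> V3) : Prop :=
  forall Fu Fv, is_partials3 U F Fu Fv -> forall u v, U u v ->
    dot (Fu u v) (Fu u v) = dot (Fv u v) (Fv u v) /\ dot (Fu u v) (Fv u v) = 0.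

Definition gauss_map (U : dom) (F N : R -> R -> V3) : Prop :=
  smooth3 U N /\
  forall u v, U u v -> dot (N u v) (N u v) = 1 /\
    forall Fu Fv, is_partials3 U F Fu Fv ->
      dot (N u v) (Fu u v) = 0 /\ dot (N u v) (Fv u v) = 0.

Record M2 := mkM2 { m11 : R; m12 : R; m21 : R; m22 : R }.
Definition m2mul (A B : M2) : M2 :=
  mkM2 (m11 A * m11 B + m12 A * m21 B) (m11 A * m12 B + m12 A * m22 B)
       (m21 A * m11 B + m22 A * m21 B) (m21 A * m12 B + m22 A * m22 B).
Definition m2det (A : M2) : R := m11 A * m22 A - m12 A * m21 A.
Definition m2inv (A : M2) : M2 :=
  let d := / m2det A in mkM2 (d * m22 A) (- d * m12 A) (- d * m21 A) (d * m11 A).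
Definition m2tr (A : M2) : R := m11 A + m22 A.

Definition first_ff (Fu Fv : V3) : M2 :=
  mkM2 (dot Fu Fu) (dot Fu Fv) (dot Fv Fu) (dot Fv Fv).
Definition second_ff (Fu Fv Nu Nv : V3) : M2 :=
  mkM2 (- dot Nu Fu) (- dot Nu Fv) (- dot Nv Fu) (- dot Nv Fv).
Definition shape_op (Fu Fv Nu Nv : V3) : M2 :=
  m2mul (m2inv (first_ff Fu Fv)) (second_ff Fu Fv Nu Nv).

Definition minimal (U : dom) (F : R -> R -> V3) : Prop :=
  forall Fu Fv N Nu Nv, is_partials3 U F Fu Fv -> gauss_map U F N ->
    is_partials3 U N Nu Nv -> forall u v, U u v ->
      m2tr (shape_op (Fu u v) (Fv u v) (Nu u v) (Nv u v)) = 0.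

Definition non_flat (U : dom) (F : R -> R -> V3) : Prop :=
  exists Fu Fv N Nu Nv, is_partials3 U F Fu Fv /\ gauss_map U F N /\
    is_partials3 U N Nu Nv /\ exists u v, U u v /\
      m2det (shape_op (Fu u v) (Fv u v) (Nu u v) (Nv u v)) <> 0.

(* Darboux pair: common enveloped (Moebius) 2-sphere congruence
   {x | a|x|^2 - 2<c,x> + b = 0}, |c|^2 - a b > 0 (a = 0: planes),
   commuting shape operators, conformally equivalent induced metrics. *)
Definition on_sphere_contact (a b : R) (c : V3) (X Xu Xv : V3) : Prop :=
  a * dot X X - 2 * dot c X + b = 0 /\
  dot (vsub (mkV3 (a * v1 X) (a * v2 X) (a * v3 X)) c) Xu = 0 /\
  dot (vsub (mkV3 (a * v1 X) (a * v2 X) (a * v3 X)) c) Xv = 0.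

Definition darboux_pair (U : dom) (F Fh : R -> R -> V3) : Prop :=
  (exists (a b : R -> R -> R) (c : R -> R -> V3),
     smooth U a /\ smooth U b /\ smooth3 U c /\
     forall u v, U u v -> dot (c u v) (c u v) - a u v * b u v > 0 /\
       forall Fu Fv Fhu Fhv, is_partials3 U F Fu Fv -> is_partials3 U Fh Fhu Fhv ->
         on_sphere_contact (a u v) (b u v) (c u v) (F u v) (Fu u v) (Fv u v) /\
         on_sphere_contact (a u v) (b u v) (c u v) (Fh u v) (Fhu u v) (Fhv u v)) /\
  (forall Fu Fv N Nu Nv Fhu Fhv Nh Nhu Nhv,
     is_partials3 U F Fu Fv -> gauss_map U F N -> is_partials3 U N Nu Nv ->
     is_partials3 U Fh Fhu Fhv -> gauss_map U Fh Nh -> is_partials3 U Nh Nhu Nhv ->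
     forall u v, U u v ->
       m2mul (shape_op (Fu u v) (Fv u v) (Nu u v) (Nv u v))
             (shape_op (Fhu u v) (Fhv u v) (Nhu u v) (Nhv u v)) =
       m2mul (shape_op (Fhu u v) (Fhv u v) (Nhu u v) (Nhv u v))
             (shape_op (Fu u v) (Fv u v) (Nu u v) (Nv u v))) /\
  (forall Fu Fv Fhu Fhv, is_partials3 U F Fu Fv -> is_partials3 U Fh Fhu Fhv ->
     forall u v, U u v -> exists lam, 0 < lam /\
       dot (Fhu u v) (Fhu u v) = lam * dot (Fu u v) (Fu u v) /\
       dot (Fhu u v) (Fhv u v) = lam * dot (Fu u v) (Fv u v) /\
       dot (Fhv u v) (Fhv u v) = lam * dot (Fv u v) (Fv u v)).

(* Fh is a Darboux transform of F with parameter t w.r.t. the dual Fs: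
   d Fh = t (Fh - F) dFs (Fh - F)  (quaternionic products) *)
Definition darboux_transform (U : dom) (F Fh Fs : R -> R -> V3) (t : R) : Prop :=
  forall Fhu Fhv Fsu Fsv, is_partials3 U Fh Fhu Fhv -> is_partials3 U Fs Fsu Fsv ->
    forall u v, U u v ->
      let g := im (vsub (Fh u v) (F u v)) in
      im (Fhu u v) = qscale t (qmul (qmul g (im (Fsu u v))) g) /\
      im (Fhv u v) = qscale t (qmul (qmul g (im (Fsv u v))) g).

(* Let g = fh - f, h = <n, g> and let rho_g be the reflection in the plane orthogonal
   to g.  In Im H one has g x g = |g|^2 rho_g(x) and -g^-1 x g = rho_g(x), so the Darboux
   equation reads d fh = t |g|^2 rho_g(dn) and the Gauss map of fh is nh = rho_g(n).
   Then dh = <g, dn> (1 - 2 t h), and, in conformal coordinates, the minimality of fh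
   together with that of f gives t |g|^2 |dn|^2 (1 - 2 t h) = 0.  Hence dh = 0, h is
   constant on the connected domain, and 2 t h = 1 at a non-flat point of f (where
   dn <> 0), so everywhere.  Then nh - n = - g / (t |g|^2), whose inverse in Im H is t g. *)

From Stdlib Require Import Reals Lra Psatz.
Open Scope R_scope.

Definition vscale (s : R) (a : V3) : V3 := mkV3 (s * v1 a) (s * v2 a) (s * v3 a).

Definition vreflect (g x : V3) : V3 := vsub x (vscale (2 * dot x g / dot g g) g).

Lemma dot_comm a b : dot a b = dot b a.
Proof. unfold dot; ring. Qed.

Lemma dot_self_ge0 a : 0 <= dot a a.
Proof. destruct a; unfold dot; simpl; nra. Qed.

Lemma dot_self_eq0 a : dot a a = 0 -> a = zero3.
Proof.
  destruct a as [a1 a2 a3]; unfold dot, zero3; simpl; intros E.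
  f_equal; nra.
Qed.

Lemma vsub_neq0 a b : a <> b -> vsub a b <> zero3.
Proof.
  intros Hab E; apply Hab; destruct a, b; unfold vsub, zero3 in E.
  injection E; intros; f_equal; lra.
Qed.

Lemma dot_self_neq0 a : a <> zero3 -> dot a a <> 0.
Proof. intros Ha E; exact (Ha (dot_self_eq0 a E)). Qed.

Lemma cross_neq0_dot_neq0 p q : cross p q <> zero3 -> dot p p <> 0.
Proof.
  intros Hpq E; apply Hpq; rewrite (dot_self_eq0 p E).
  unfold cross, zero3; simpl; f_equal; ring.
Qed.

(* With [w = p × q]: [|w|^2 x - <x,w> w = w × (x × w) = <x,q> (w × p) - <x,p> (w × q)]. *)
Lemma perp_cross_parallel x p q : dot x p = 0 -> dot x q = 0 ->
  vscale (dot (cross p q) (cross p q)) x = vscale (dot x (cross p q)) (cross p q).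
Proof.
  intros Hp Hq.
  set (w := cross p q).
  transitivity (vadd (vscale (dot x w) w)
                  (vsub (vscale (dot x q) (cross w p)) (vscale (dot x p) (cross w q)))).
  - destruct x, p, q; unfold w, vadd, vsub, vscale, dot, cross; simpl; f_equal; ring.
  - rewrite Hp, Hq; destruct (cross w p), (cross w q), w.
    unfold vadd, vsub, vscale; simpl; f_equal; ring.
Qed.

Lemma unit_perp_parallel x y p q :
  dot x p = 0 -> dot x q = 0 -> dot y p = 0 -> dot y q = 0 -> dot y y = 1 ->
  cross p q <> zero3 -> x = vscale (dot x y) y.
Proof.
  intros Hxp Hxq Hyp Hyq Hy Hw.
  pose proof (perp_cross_parallel x p q Hxp Hxq) as Ex.
  pose proof (perp_cross_parallel y p q Hyp Hyq) as Ey.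
  pose proof (dot_self_neq0 _ Hw) as HW.
  set (w := cross p q) in *.
  set (W := dot w w) in *; set (X := dot x w) in *; set (Y := dot y w) in *.
  destruct x as [x1 x2 x3], y as [y1 y2 y3], w as [w1 w2 w3].
  unfold vscale in Ex, Ey; injection Ex; injection Ey; intros Ey3 Ey2 Ey1 Ex3 Ex2 Ex1.
  unfold dot in Hy; simpl in *.
  assert (HY : Y * Y = W).
  { apply (Rmult_eq_reg_l W); [|exact HW].
    transitivity ((Y * w1) * (Y * w1) + (Y * w2) * (Y * w2) + (Y * w3) * (Y * w3)).
    - unfold W, dot; simpl; ring.
    - rewrite <- Ey1, <- Ey2, <- Ey3.
      transitivity (W * W * (y1 * y1 + y2 * y2 + y3 * y3)); [ring|]. rewrite Hy; ring. }
  assert (HYx : forall xi yi wi, W * xi = X * wi -> W * yi = Y * wi -> Y * xi = X * yi).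
  { intros xi yi wi Hxi Hyi; apply (Rmult_eq_reg_l W); [|exact HW].
    transitivity (Y * (W * xi)); [ring|]; rewrite Hxi.
    transitivity (X * (W * yi)); [|ring]; rewrite Hyi; ring. }
  assert (HY0 : Y <> 0) by (intro E; apply HW; rewrite <- HY, E; ring).
  pose proof (HYx _ _ _ Ex1 Ey1) as E1; pose proof (HYx _ _ _ Ex2 Ey2) as E2;
    pose proof (HYx _ _ _ Ex3 Ey3) as E3.
  assert (Hxy : forall yi, Y * ((x1 * y1 + x2 * y2 + x3 * y3) * yi) = X * yi).
  { intros yi; transitivity (((Y * x1) * y1 + (Y * x2) * y2 + (Y * x3) * y3) * yi); [ring|].
    rewrite E1, E2, E3; transitivity (X * (y1 * y1 + y2 * y2 + y3 * y3) * yi); [ring|].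
    rewrite Hy; ring. }
  unfold vscale, dot; simpl; f_equal; apply (Rmult_eq_reg_l Y); auto; rewrite Hxy; auto.
Qed.

Lemma im_inj a b : im a = im b -> a = b.
Proof. destruct a, b; unfold im; intros E; injection E; intros; subst; reflexivity. Qed.

Lemma qscale_im_vscale s r x : qscale s (im (vscale r x)) = im (vscale (s * r) x).
Proof. destruct x; unfold qscale, im, vscale; simpl; f_equal; ring. Qed.

Lemma im_sandwich g x : g <> zero3 ->
  qmul (qmul (im g) (im x)) (im g) = im (vscale (dot g g) (vreflect g x)).
Proof.
  intros Hg; pose proof (dot_self_neq0 _ Hg) as HG.
  destruct g, x; unfold dot in *; simpl in *.
  unfold im, qmul, vreflect, vsub, vscale, dot; simpl; f_equal; field; auto.
Qed.

Lemma im_conj_inv g x : g <> zero3 ->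
  qopp (qmul (qmul (qinv (im g)) (im x)) (im g)) = im (vreflect g x).
Proof.
  intros Hg; pose proof (dot_self_neq0 _ Hg) as HG.
  destruct g, x; unfold dot in *; simpl in *.
  unfold im, qopp, qmul, qinv, qscale, qconj, qnorm2, vreflect, vsub, vscale, dot; simpl;
    f_equal; field; auto.
Qed.

Lemma qinv_vreflect_sub t g x : t <> 0 -> g <> zero3 -> 2 * t * dot x g = 1 ->
  qscale (/ t) (qinv (qsub (im (vreflect g x)) (im x))) = im g.
Proof.
  intros Ht Hg Hxg; pose proof (dot_self_neq0 _ Hg) as HG.
  assert (Ex : dot x g = / (2 * t)) by (field_simplify_eq; auto; lra).
  unfold vreflect; rewrite Ex.
  destruct g, x; unfold dot in *; simpl in *.
  unfold im, qsub, qadd, qopp, qinv, qscale, qconj, qnorm2, vsub, vscale; simpl;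
    f_equal; field; auto.
Qed.

Definition is_vderiv (A : R -> V3) (x : R) (a : V3) : Prop :=
  derivable_pt_lim (fun s => v1 (A s)) x (v1 a) /\
  derivable_pt_lim (fun s => v2 (A s)) x (v2 a) /\
  derivable_pt_lim (fun s => v3 (A s)) x (v3 a).

Lemma is_vderiv_sub A B x a b : is_vderiv A x a -> is_vderiv B x b ->
  is_vderiv (fun s => vsub (A s) (B s)) x (vsub a b).
Proof.
  intros (? & ? & ?) (? & ? & ?); repeat split; apply derivable_pt_lim_minus; auto.
Qed.

Lemma is_vderiv_scale p A x p' a : derivable_pt_lim p x p' -> is_vderiv A x a ->
  is_vderiv (fun s => vscale (p s) (A s)) x (vadd (vscale p' (A x)) (vscale (p x) a)).
Proof.
  intros Hp (? & ? & ?); repeat split; apply derivable_pt_lim_mult; auto.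
Qed.

Lemma derivable_pt_lim_dot A B x a b : is_vderiv A x a -> is_vderiv B x b ->
  derivable_pt_lim (fun s => dot (A s) (B s)) x (dot a (B x) + dot (A x) b).
Proof.
  intros (? & ? & ?) (? & ? & ?).
  replace (dot a (B x) + dot (A x) b) with
    ((v1 a * v1 (B x) + v1 (A x) * v1 b) + (v2 a * v2 (B x) + v2 (A x) * v2 b)
     + (v3 a * v3 (B x) + v3 (A x) * v3 b)) by (unfold dot; ring).
  repeat apply derivable_pt_lim_plus; apply derivable_pt_lim_mult; auto.
Qed.

Lemma is_vderiv_locally_ext A B x a l r : l < x < r ->
  (forall s, l < s < r -> A s = B s) -> is_vderiv A x a -> is_vderiv B x a.
Proof.
  intros Hx HAB (? & ? & ?); repeat split;
    (eapply derivable_pt_lim_locally_ext; [exact Hx | | eassumption]);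
    intros s Hs; simpl; rewrite HAB; auto.
Qed.

Lemma is_vderiv_unique A x a b : is_vderiv A x a -> is_vderiv A x b -> a = b.
Proof.
  intros (? & ? & ?) (? & ? & ?); destruct a, b; simpl in *.
  f_equal; eapply uniqueness_limite; eauto.
Qed.

Lemma is_vderiv_unit_orth N x nd l r : l < x < r ->
  (forall s, l < s < r -> dot (N s) (N s) = 1) -> is_vderiv N x nd -> dot (N x) nd = 0.
Proof.
  intros Hx HN Hnd.
  assert (H1 : derivable_pt_lim (fun s => dot (N s) (N s)) x 0).
  { apply (derivable_pt_lim_locally_ext (fun _ => 1)) with l r;
      [exact Hx | | apply derivable_pt_lim_const].
    intros s Hs; symmetry; auto. }
  pose proof (uniqueness_limite _ _ _ _ (derivable_pt_lim_dot _ _ _ _ _ Hnd Hnd) H1) as E.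
  rewrite dot_comm in E; lra.
Qed.

Definition vreflect_deriv (g gd x xd : V3) : V3 :=
  vsub xd (vadd (vscale ((2 * (dot xd g + dot x gd) * dot g g
                          - (dot gd g + dot g gd) * (2 * dot x g)) / (dot g g)²) g)
                (vscale (2 * dot x g / dot g g) gd)).

Lemma is_vderiv_reflect G X x gd xd : is_vderiv G x gd -> is_vderiv X x xd ->
  G x <> zero3 ->
  is_vderiv (fun s => vreflect (G s) (X s)) x (vreflect_deriv (G x) gd (X x) xd).
Proof.
  intros HG HX Hg; unfold vreflect, vreflect_deriv.
  apply is_vderiv_sub; [exact HX|].
  apply (is_vderiv_scale (fun s => 2 * dot (X s) (G s) / dot (G s) (G s))); [|exact HG].
  apply (derivable_pt_lim_div (fun s => 2 * dot (X s) (G s)) (fun s => dot (G s) (G s)));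
    [| |exact (dot_self_neq0 _ Hg)].
  - apply (derivable_pt_lim_scal (fun s => dot (X s) (G s))), derivable_pt_lim_dot; auto.
  - apply derivable_pt_lim_dot; auto.
Qed.

Lemma is_partials3_vderiv U F Fu Fv u v : is_partials3 U F Fu Fv -> U u v ->
  is_vderiv (fun s => F s v) u (Fu u v) /\ is_vderiv (fun s => F u s) v (Fv u v).
Proof.
  intros (H1 & H2 & H3) Huv.
  destruct (H1 u v Huv), (H2 u v Huv), (H3 u v Huv); repeat split; auto.
Qed.

Lemma vderiv_is_partials3 U F Fu Fv :
  (forall u v, U u v ->
     is_vderiv (fun s => F s v) u (Fu u v) /\ is_vderiv (fun s => F u s) v (Fv u v)) ->
  is_partials3 U F Fu Fv.
Proof.
  intros H; split; [|split]; intros u v Huv;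
    destruct (H u v Huv) as [(? & ? & ?) (? & ? & ?)]; split; assumption.
Qed.

Lemma smooth3_partials U F : smooth3 U F -> exists Fu Fv, is_partials3 U F Fu Fv.
Proof.
  intros (H1 & H2 & H3).
  destruct (H1 1%nat) as (a1 & b1 & P1 & _), (H2 1%nat) as (a2 & b2 & P2 & _),
    (H3 1%nat) as (a3 & b3 & P3 & _).
  exists (fun u v => mkV3 (a1 u v) (a2 u v) (a3 u v)),
    (fun u v => mkV3 (b1 u v) (b2 u v) (b3 u v)).
  exact (conj P1 (conj P2 P3)).
Qed.

Lemma open_dom_lines U u v : open_dom U -> U u v -> exists e, 0 < e /\
  (forall s, u - e < s < u + e -> U s v) /\ (forall s, v - e < s < v + e -> U u s).
Proof.
  intros HU Huv; destruct (HU u v Huv) as (e & He & Hball).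
  exists e; repeat split; auto; intros s Hs; apply Hball; nra.
Qed.

Lemma derivable_pt_lim0_eq_le (p : R -> R) a b : a <= b ->
  (forall s, a <= s <= b -> derivable_pt_lim p s 0) -> p a = p b.
Proof.
  intros Hab Hp.
  assert (pr : forall s, a < s < b -> derivable_pt p s)
    by (intros s Hs; exists 0; apply Hp; lra).
  symmetry; apply (null_derivative_loc p a b pr); [| |lra].
  - intros s Hs; apply derivable_continuous_pt; exists 0; exact (Hp s Hs).
  - intros s Hs; apply derive_pt_eq_0, Hp; lra.
Qed.

Lemma derivable_pt_lim0_eq (p : R -> R) a b :
  (forall s, Rmin a b <= s <= Rmax a b -> derivable_pt_lim p s 0) -> p a = p b.
Proof.
  intros Hp; destruct (Rle_dec a b) as [Hab|Hab].
  - apply derivable_pt_lim0_eq_le; [exact Hab|].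
    rewrite Rmin_left, Rmax_right in Hp by exact Hab; exact Hp.
  - symmetry; apply derivable_pt_lim0_eq_le; [lra|].
    rewrite Rmin_right, Rmax_left in Hp by lra; exact Hp.
Qed.

Lemma sqr_sub_le_between s a b : Rmin a b <= s <= Rmax a b -> (s - a) ^ 2 <= (b - a) ^ 2.
Proof. unfold Rmin, Rmax; destruct (Rle_dec a b); intros Hs; nra. Qed.

Lemma disk_const U F Fu Fv u v e :
  (forall u' v', (u' - u) ^ 2 + (v' - v) ^ 2 < e ^ 2 -> U u' v') ->
  is_dpartials U F Fu Fv -> (forall x y, U x y -> Fu x y = 0 /\ Fv x y = 0) ->
  forall u' v', (u' - u) ^ 2 + (v' - v) ^ 2 < e ^ 2 -> F u' v' = F u v.
Proof.
  intros Hdisk HF H0 u' v' Hin.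
  transitivity (F u' v).
  - symmetry; apply (derivable_pt_lim0_eq (fun s => F u' s)); intros s Hs.
    pose proof (sqr_sub_le_between s v v' Hs).
    assert (Hs' : U u' s) by (apply Hdisk; lra).
    destruct (HF u' s Hs') as [_ Hd]; rewrite (proj2 (H0 u' s Hs')) in Hd; exact Hd.
  - symmetry; apply (derivable_pt_lim0_eq (fun s => F s v)); intros s Hs.
    pose proof (sqr_sub_le_between s u u' Hs); pose proof (pow2_ge_0 (v' - v)).
    assert (Hs' : U s v) by (apply Hdisk; nra).
    destruct (HF s v Hs') as [Hd _]; rewrite (proj1 (H0 s v Hs')) in Hd; exact Hd.
Qed.

Lemma connected_dom_const U F Fu Fv : open_dom U -> connected_dom U ->
  is_dpartials U F Fu Fv -> (forall x y, U x y -> Fu x y = 0 /\ Fv x y = 0) ->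
  forall u0 v0 u v, U u0 v0 -> U u v -> F u v = F u0 v0.
Proof.
  intros HO HC HF H0 u0 v0 u v HU0 HU.
  destruct (Req_dec (F u v) (F u0 v0)) as [E|NE]; [exact E|exfalso].
  apply (HC (fun x y => U x y /\ F x y = F u0 v0) (fun x y => U x y /\ F x y <> F u0 v0)).
  - intros x y [Hxy Ef]; destruct (HO x y Hxy) as (e & He & Hdisk).
    exists e; split; [exact He|]; intros x' y' Hin; split; [auto|].
    rewrite <- Ef; eapply disk_const; eauto.
  - intros x y [Hxy Ef]; destruct (HO x y Hxy) as (e & He & Hdisk).
    exists e; split; [exact He|]; intros x' y' Hin; split; [auto|].
    erewrite disk_const; eauto.
  - intros x y Hxy; destruct (Req_dec (F x y) (F u0 v0)); auto.
  - intros x y _ [[_ A] [_ B]]; auto.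
  - exists u0, v0; auto.
  - exists u, v; auto.
Qed.

Lemma shape_op_trace_conformal Fu Fv Nu Nv :
  dot Fu Fu = dot Fv Fv -> dot Fu Fv = 0 -> dot Fu Fu <> 0 ->
  m2tr (shape_op Fu Fv Nu Nv) = - (dot Nu Fu + dot Nv Fv) / dot Fu Fu.
Proof.
  intros Hconf Horth HE.
  unfold shape_op, first_ff, second_ff, m2tr, m2mul, m2inv, m2det; simpl.
  rewrite (dot_comm Fv Fu), Horth, <- Hconf; field; exact HE.
Qed.

Lemma minimal_normal_trace U F Fu Fv N Nu Nv :
  conformal U F -> minimal U F -> is_partials3 U F Fu Fv ->
  (forall u v, U u v -> cross (Fu u v) (Fv u v) <> zero3) ->
  gauss_map U F N -> is_partials3 U N Nu Nv ->
  forall u v, U u v -> dot (Nu u v) (Fu u v) + dot (Nv u v) (Fv u v) = 0.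
Proof.
  intros Hconf Hmin HF Hreg HN HdN u v Huv.
  pose proof (cross_neq0_dot_neq0 _ _ (Hreg u v Huv)) as HE.
  destruct (Hconf Fu Fv HF u v Huv) as [Hiso Horth].
  pose proof (Hmin Fu Fv N Nu Nv HF HN HdN u v Huv) as Htr.
  rewrite shape_op_trace_conformal in Htr by assumption.
  apply (Rmult_eq_reg_r (- / dot (Fu u v) (Fu u v))).
  - unfold Rdiv in Htr; lra.
  - apply Ropp_neq_0_compat, Rinv_neq_0_compat; exact HE.
Qed.

Lemma gauss_map_parallel U F Fu Fv n N :
  is_partials3 U F Fu Fv -> (forall u v, U u v -> cross (Fu u v) (Fv u v) <> zero3) ->
  gauss_map U F n -> gauss_map U F N ->
  forall u v, U u v -> N u v = vscale (dot (N u v) (n u v)) (n u v).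
Proof.
  intros HF Hreg [_ Hn] [_ HN] u v Huv.
  destruct (Hn u v Huv) as [Hn1 Hnperp], (HN u v Huv) as [_ HNperp].
  destruct (Hnperp Fu Fv HF), (HNperp Fu Fv HF).
  apply (unit_perp_parallel _ _ (Fu u v) (Fv u v)); auto.
Qed.

Lemma is_vderiv_parallel_critical N n x Nd l r : l < x < r ->
  (forall s, l < s < r -> N s = vscale (dot (N s) (n s)) (n s)) ->
  is_vderiv n x zero3 -> is_vderiv N x Nd -> exists c, Nd = vscale c (n x).
Proof.
  intros Hx HNn Hn HN.
  exists (dot Nd (n x) + dot (N x) zero3).
  transitivity (vadd (vscale (dot Nd (n x) + dot (N x) zero3) (n x))
                     (vscale (dot (N x) (n x)) zero3)).
  - eapply is_vderiv_unique; [exact HN|].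
    apply (is_vderiv_locally_ext (fun s => vscale (dot (N s) (n s)) (n s))) with l r;
      [exact Hx | intros s Hs; symmetry; auto |].
    apply is_vderiv_scale; [apply derivable_pt_lim_dot|]; assumption.
  - destruct (n x); unfold vadd, vscale, zero3; simpl; f_equal; ring.
Qed.

(* Another Gauss map is [N = <N,n> n]; where [dn = 0] its derivative is normal,
   so its second fundamental form vanishes. *)
Lemma non_flat_dgauss_neq0 U F Fu Fv n nu nv : open_dom U ->
  is_partials3 U F Fu Fv -> (forall u v, U u v -> cross (Fu u v) (Fv u v) <> zero3) ->
  gauss_map U F n -> is_partials3 U n nu nv -> non_flat U F ->
  exists u v, U u v /\ dot (nu u v) (nu u v) + dot (nv u v) (nv u v) <> 0.
Proof.
  intros HO HF Hreg Hn Hdn (Fu' & Fv' & N & Nu & Nv & HF' & HN & HdN & u & v & Huv & Hdet).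
  exists u, v; split; [exact Huv|]; intros Hdn0; apply Hdet.
  pose proof (dot_self_ge0 (nu u v)); pose proof (dot_self_ge0 (nv u v)).
  assert (Hnu : nu u v = zero3) by (apply dot_self_eq0; lra).
  assert (Hnv : nv u v = zero3) by (apply dot_self_eq0; lra).
  pose proof (gauss_map_parallel _ _ _ _ _ _ HF Hreg Hn HN) as HNn.
  destruct (open_dom_lines U u v HO Huv) as (e & He & Hu & Hv).
  destruct (is_partials3_vderiv _ _ _ _ u v Hdn Huv) as [Dnu Dnv].
  destruct (is_partials3_vderiv _ _ _ _ u v HdN Huv) as [DNu DNv].
  rewrite Hnu in Dnu; rewrite Hnv in Dnv.
  destruct (is_vderiv_parallel_critical (fun s => N s v) (fun s => n s v) u (Nu u v)
              (u - e) (u + e)) as [cu Ecu]; auto; [lra|].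
  destruct (is_vderiv_parallel_critical (fun s => N u s) (fun s => n u s) v (Nv u v)
              (v - e) (v + e)) as [cv Ecv]; auto; [lra|].
  destruct (proj2 (proj2 Hn u v Huv) Fu' Fv' HF') as [Hn1 Hn2].
  assert (Hscale : forall c w, dot (vscale c (n u v)) w = c * dot (n u v) w)
    by (intros c w; unfold dot, vscale; simpl; ring).
  unfold shape_op, second_ff; rewrite Ecu, Ecv, !Hscale, Hn1, Hn2.
  unfold m2det, m2mul; simpl; ring.
Qed.

Lemma darboux_dot_normal_deriv t g n nd fd : g <> zero3 ->
  dot n nd = 0 -> dot n fd = 0 ->
  dot nd g + dot n (vsub (vscale (t * dot g g) (vreflect g nd)) fd)
  = dot g nd * (1 - 2 * t * dot n g).
Proof.
  intros Hg Hnd Hfd; pose proof (dot_self_neq0 _ Hg) as HG.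
  transitivity (dot g nd * (1 - 2 * t * dot n g) + t * dot g g * dot n nd - dot n fd).
  - destruct g, n, nd, fd; unfold dot in *; unfold vreflect, vsub, vscale, dot; simpl in *.
    field; exact HG.
  - rewrite Hnd, Hfd; ring.
Qed.

Lemma darboux_dot_reflect_deriv t g n nd fd : g <> zero3 ->
  dot n nd = 0 -> dot n fd = 0 ->
  dot (vreflect_deriv g (vsub (vscale (t * dot g g) (vreflect g nd)) fd) n nd)
      (vscale (t * dot g g) (vreflect g nd))
  = t * dot g g * dot nd nd * (1 - 2 * t * dot n g) + 2 * t * dot n g * dot fd nd.
Proof.
  intros Hg Hnd Hfd; pose proof (dot_self_neq0 _ Hg) as HG.
  unfold vreflect_deriv at 1; rewrite (darboux_dot_normal_deriv t g n nd fd Hg Hnd Hfd).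
  destruct g, n, nd, fd; unfold dot in *; unfold vreflect, vsub, vadd, vscale, dot, Rsqr;
    simpl in *.
  field; exact HG.
Qed.

Section MinimalDarbouxTransform.

Variables (U : dom) (f fh n nh fu fv fhu fhv nu nv : R -> R -> V3) (t : R).

Local Notation g u v := (vsub (fh u v) (f u v)).
Local Notation h u v := (dot (n u v) (g u v)).

Hypothesis U_open : open_dom U.
Hypothesis t_neq0 : t <> 0.
Hypothesis f_partials : is_partials3 U f fu fv.
Hypothesis fh_partials : is_partials3 U fh fhu fhv.
Hypothesis n_partials : is_partials3 U n nu nv.
Hypothesis f_regular : forall u v, U u v -> cross (fu u v) (fv u v) <> zero3.
Hypothesis fh_regular : forall u v, U u v -> cross (fhu u v) (fhv u v) <> zero3.
Hypothesis f_conformal : conformal U f.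
Hypothesis fh_conformal : conformal U fh.
Hypothesis f_minimal : minimal U f.
Hypothesis fh_minimal : minimal U fh.
Hypothesis n_gauss : gauss_map U f n.
Hypothesis nh_gauss : gauss_map U fh nh.
Hypothesis fh_neq_f : forall u v, U u v -> fh u v <> f u v.
Hypothesis fh_darboux : darboux_transform U f fh n t.
Hypothesis nh_reflect : forall u v, U u v -> nh u v = vreflect (g u v) (n u v).

Lemma g_neq0 u v : U u v -> g u v <> zero3.
Proof. intros Huv; exact (vsub_neq0 _ _ (fh_neq_f u v Huv)). Qed.

Lemma fh_partials_reflect u v : U u v ->
  fhu u v = vscale (t * dot (g u v) (g u v)) (vreflect (g u v) (nu u v)) /\
  fhv u v = vscale (t * dot (g u v) (g u v)) (vreflect (g u v) (nv u v)).
Proof.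
  intros Huv; destruct (fh_darboux _ _ _ _ fh_partials n_partials u v Huv) as [Du Dv].
  split; apply im_inj;
    rewrite ?Du, ?Dv, im_sandwich, qscale_im_vscale by exact (g_neq0 u v Huv); reflexivity.
Qed.

Lemma n_orth_dn u v : U u v -> dot (n u v) (nu u v) = 0 /\ dot (n u v) (nv u v) = 0.
Proof.
  intros Huv; destruct (open_dom_lines U u v U_open Huv) as (e & He & Hu & Hv).
  destruct (is_partials3_vderiv _ _ _ _ u v n_partials Huv) as [Du Dv].
  split.
  - apply (is_vderiv_unit_orth (fun s => n s v) u _ (u - e) (u + e)); [lra | | exact Du].
    intros s Hs; apply (proj2 n_gauss s v (Hu s Hs)).
  - apply (is_vderiv_unit_orth (fun s => n u s) v _ (v - e) (v + e)); [lra | | exact Dv].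
    intros s Hs; apply (proj2 n_gauss u s (Hv s Hs)).
Qed.

Lemma n_orth_df u v : U u v -> dot (n u v) (fu u v) = 0 /\ dot (n u v) (fv u v) = 0.
Proof. intros Huv; exact (proj2 (proj2 n_gauss u v Huv) fu fv f_partials). Qed.

Lemma h_partials : is_dpartials U (fun u v => h u v)
  (fun u v => dot (g u v) (nu u v) * (1 - 2 * t * h u v))
  (fun u v => dot (g u v) (nv u v) * (1 - 2 * t * h u v)).
Proof.
  intros u v Huv.
  destruct (fh_partials_reflect u v Huv) as [Efu Efv].
  destruct (n_orth_dn u v Huv) as [Hnu Hnv], (n_orth_df u v Huv) as [Hfu Hfv].
  destruct (is_partials3_vderiv _ _ _ _ u v f_partials Huv) as [Dfu Dfv].
  destruct (is_partials3_vderiv _ _ _ _ u v fh_partials Huv) as [Dfhu Dfhv].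
  destruct (is_partials3_vderiv _ _ _ _ u v n_partials Huv) as [Dnu Dnv].
  cbv beta; split.
  - rewrite <- (darboux_dot_normal_deriv t _ _ _ (fu u v) (g_neq0 u v Huv) Hnu Hfu), <- Efu.
    apply (derivable_pt_lim_dot (fun s => n s v) (fun s => g s v));
      [exact Dnu | apply is_vderiv_sub; assumption].
  - rewrite <- (darboux_dot_normal_deriv t _ _ _ (fv u v) (g_neq0 u v Huv) Hnv Hfv), <- Efv.
    apply (derivable_pt_lim_dot (fun s => n u s) (fun s => g u s));
      [exact Dnv | apply is_vderiv_sub; assumption].
Qed.

Lemma nh_partials : is_partials3 U nh
  (fun u v => vreflect_deriv (g u v) (vsub (fhu u v) (fu u v)) (n u v) (nu u v))
  (fun u v => vreflect_deriv (g u v) (vsub (fhv u v) (fv u v)) (n u v) (nv u v)).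
Proof.
  apply vderiv_is_partials3; intros u v Huv.
  destruct (open_dom_lines U u v U_open Huv) as (e & He & Hu & Hv).
  destruct (is_partials3_vderiv _ _ _ _ u v f_partials Huv) as [Dfu Dfv].
  destruct (is_partials3_vderiv _ _ _ _ u v fh_partials Huv) as [Dfhu Dfhv].
  destruct (is_partials3_vderiv _ _ _ _ u v n_partials Huv) as [Dnu Dnv].
  split.
  - apply (is_vderiv_locally_ext (fun s => vreflect (g s v) (n s v))) with (u - e) (u + e);
      [lra | intros s Hs; symmetry; apply nh_reflect; auto |].
    apply (is_vderiv_reflect (fun s => g s v) (fun s => n s v));
      [apply is_vderiv_sub | | apply g_neq0]; assumption.
  - apply (is_vderiv_locally_ext (fun s => vreflect (g u s) (n u s))) with (v - e) (v + e);
      [lra | intros s Hs; symmetry; apply nh_reflect; auto |].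
    apply (is_vderiv_reflect (fun s => g u s) (fun s => n u s));
      [apply is_vderiv_sub | | apply g_neq0]; assumption.
Qed.

Lemma dgauss_mul_eq0 u v : U u v ->
  (dot (nu u v) (nu u v) + dot (nv u v) (nv u v)) * (1 - 2 * t * h u v) = 0.
Proof.
  intros Huv.
  pose proof (minimal_normal_trace _ _ _ _ _ _ _ f_conformal f_minimal f_partials f_regular
                n_gauss n_partials u v Huv) as Htr.
  pose proof (minimal_normal_trace _ _ _ _ _ _ _ fh_conformal fh_minimal fh_partials
                fh_regular nh_gauss nh_partials u v Huv) as Htrh.
  destruct (fh_partials_reflect u v Huv) as [Efu Efv].
  destruct (n_orth_dn u v Huv) as [Hnu Hnv], (n_orth_df u v Huv) as [Hfu Hfv].
  cbv beta in Htrh; rewrite Efu, Efv, !darboux_dot_reflect_deriv in Htrh by auto using g_neq0.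
  rewrite (dot_comm (fu u v)), (dot_comm (fv u v)) in Htrh.
  pose proof (dot_self_neq0 _ (g_neq0 u v Huv)) as HG.
  assert (Hcancel : 2 * t * h u v * (dot (nu u v) (fu u v) + dot (nv u v) (fv u v)) = 0)
    by (rewrite Htr; ring).
  apply (Rmult_eq_reg_l (t * dot (g u v) (g u v)));
    [|apply Rmult_integral_contrapositive; auto].
  lra.
Qed.

Lemma h_partials_eq0 u v : U u v ->
  dot (g u v) (nu u v) * (1 - 2 * t * h u v) = 0 /\
  dot (g u v) (nv u v) * (1 - 2 * t * h u v) = 0.
Proof.
  intros Huv; destruct (Req_dec (1 - 2 * t * h u v) 0) as [E|NE].
  - rewrite E; split; ring.
  - pose proof (dgauss_mul_eq0 u v Huv) as Hdn.
    pose proof (dot_self_ge0 (nu u v)); pose proof (dot_self_ge0 (nv u v)).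
    assert (Hsum : dot (nu u v) (nu u v) + dot (nv u v) (nv u v) = 0).
    { destruct (Rmult_integral _ _ Hdn); [assumption | contradiction]. }
    rewrite (dot_self_eq0 (nu u v)), (dot_self_eq0 (nv u v)) by lra.
    unfold dot, zero3; simpl; split; ring.
Qed.

Lemma two_t_h_eq1 : connected_dom U ->
  (exists u0 v0, U u0 v0 /\ dot (nu u0 v0) (nu u0 v0) + dot (nv u0 v0) (nv u0 v0) <> 0) ->
  forall u v, U u v -> 2 * t * h u v = 1.
Proof.
  intros U_conn (u0 & v0 & Huv0 & Hdn0) u v Huv.
  assert (Hh0 : 1 - 2 * t * h u0 v0 = 0).
  { destruct (Rmult_integral _ _ (dgauss_mul_eq0 u0 v0 Huv0)); [contradiction | assumption]. }
  rewrite (connected_dom_const U _ _ _ U_open U_conn h_partials h_partials_eq0 u0 v0 u v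
             Huv0 Huv).
  lra.
Qed.

End MinimalDarbouxTransform.

Theorem corollary3p3 (U : dom) (f fh n nh : R -> R -> V3) (t : R) :
  open_dom U -> connected_dom U ->
  t <> 0 ->
  immersion U f -> immersion U fh ->
  conformal U f -> conformal U fh ->
  minimal U f -> minimal U fh ->
  non_flat U f -> non_flat U fh ->
  darboux_pair U f fh ->
  gauss_map U f n ->
  (forall u v, U u v -> fh u v <> f u v) ->
  darboux_transform U f fh n t ->
  (forall u v, U u v ->
     im (nh u v) = qopp (qmul (qmul (qinv (im (vsub (fh u v) (f u v)))) (im (n u v)))
                              (im (vsub (fh u v) (f u v))))) ->
  gauss_map U fh nh ->
  exists c : V3, forall u v, U u v ->
    im (fh u v) = qadd (im (vadd (f u v) c))
                       (qscale (/ t) (qinv (qsub (im (nh u v)) (im (n u v))))).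
Proof.
  intros U_open U_conn t_neq0 (_ & fu & fv & f_partials & f_regular)
    (_ & fhu & fhv & fh_partials & fh_regular) f_conformal fh_conformal f_minimal fh_minimal
    f_non_flat _ _ n_gauss fh_neq_f fh_darboux nh_def nh_gauss.
  destruct (smooth3_partials _ _ (proj1 n_gauss)) as (nu & nv & n_partials).
  assert (nh_reflect : forall u v, U u v -> nh u v = vreflect (vsub (fh u v) (f u v)) (n u v)).
  { intros u v Huv; apply im_inj; rewrite nh_def, im_conj_inv; auto using vsub_neq0. }
  pose proof (non_flat_dgauss_neq0 _ _ _ _ _ _ _ U_open f_partials f_regular n_gauss
                n_partials f_non_flat) as dn_neq0.
  pose proof (two_t_h_eq1 U f fh n nh fu fv fhu fhv nu nv t U_open t_neq0 f_partials
    fh_partials n_partials f_regular fh_regular f_conformal fh_conformal f_minimal fh_minimal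
    n_gauss nh_gauss fh_neq_f fh_darboux nh_reflect U_conn dn_neq0) as h_eq.
  exists zero3; intros u v Huv.
  rewrite nh_reflect, qinv_vreflect_sub by auto using vsub_neq0.
  destruct (fh u v), (f u v); unfold im, qadd, vadd, vsub, zero3; simpl; f_equal; ring.
Qed.
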